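(* Let $d\ge1$. Every $d$-dimensional lattice polytope $P\subseteq\mathbb{R}^d$ with $\mathrm{width}(P)\ge 2\,\mathrm{Flt}(d)\,d$ is spanning.
   Context: A lattice polytope is the convex hull of finitely many points of $\mathbb{Z}^d$. It is spanning if every point of $\mathbb{Z}^d$ is an affine integral combination of lattice points of $P$. $\mathrm{width}(P)=\min_{u\in(\mathbb{Z}^d)^*\setminus\{0\}}\max_{x,y\in P}|u(x)-u(y)|$, and $\mathrm{Flt}(d)=\sup\{\mathrm{width}(K): K\subseteq\mathbb{R}^d \text{ non-empty compact convex}, K\cap\mathbb{Z}^d=\emptyset\}$. *)

From mathcomp Require Import all_boot.
From Stdlib Require Import Reals ZArith.
Set Implicit Arguments. Unset Strict Implicit. Unset Printing Implicit Defensive.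

Local Open Scope R_scope.

Definition rpoint (d : nat) := 'I_d -> R.
Definition zpoint (d : nat) := 'I_d -> Z.

Definition zvec (d : nat) (z : zpoint d) : rpoint d := fun i => IZR (z i).

Definition is_lattice_point (d : nat) (x : rpoint d) : Prop :=
  exists z : zpoint d, forall i, x i = IZR (z i).

Definition lfun (d : nat) (u : zpoint d) (x : rpoint d) : R :=
  \big[Rplus/0]_(i < d) (IZR (u i) * x i).

Definition nonzero_zvec (d : nat) (u : zpoint d) : Prop := exists i, u i <> 0%Z.

Definition is_max (S : R -> Prop) (m : R) : Prop := S m /\ forall s, S s -> s <= m.
Definition is_min (S : R -> Prop) (m : R) : Prop := S m /\ forall s, S s -> m <= s.

Definition dir_width (d : nat) (K : rpoint d -> Prop) (u : zpoint d) (w : R) : Prop :=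
  is_max (fun s => exists x y, K x /\ K y /\ s = Rabs (lfun u x - lfun u y)) w.

Definition is_width (d : nat) (K : rpoint d -> Prop) (w : R) : Prop :=
  is_min (fun s => exists u, nonzero_zvec u /\ dir_width K u s) w.

Definition bounded_set (d : nat) (K : rpoint d -> Prop) : Prop :=
  exists M, forall x, K x -> forall i, Rabs (x i) <= M.

Definition closed_set (d : nat) (K : rpoint d -> Prop) : Prop :=
  forall (s : nat -> rpoint d) (x : rpoint d),
    (forall n, K (s n)) -> (forall i, Un_cv (fun n => s n i) (x i)) -> K x.

Definition convex_set (d : nat) (K : rpoint d -> Prop) : Prop :=
  forall x y t, K x -> K y -> 0 <= t <= 1 ->
    K (fun i => t * x i + (1 - t) * y i).

Definition nonempty_set (d : nat) (K : rpoint d -> Prop) : Prop := exists x, K x.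

Definition Flt_set (d : nat) (w : R) : Prop :=
  exists K : rpoint d -> Prop,
    nonempty_set K /\ closed_set K /\ bounded_set K /\ convex_set K /\
    (forall x, K x -> ~ is_lattice_point x) /\ is_width K w.

(* f = Flt(d) = sup Flt_set d (as a finite least upper bound) *)
Definition is_Flt (d : nat) (f : R) : Prop := is_lub (Flt_set d) f.

Definition conv_hull (d : nat) (V : seq (zpoint d)) (x : rpoint d) : Prop :=
  exists lam : nat -> R,
    (forall j, 0 <= lam j) /\
    \big[Rplus/0]_(j < size V) lam j = 1 /\
    forall i, x i = \big[Rplus/0]_(j < size V) (lam j * IZR (nth (fun _ => 0%Z) V j i)).

Definition full_dim (d : nat) (P : rpoint d -> Prop) : Prop :=
  forall a : rpoint d,
    (forall x y, P x -> P y ->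
       \big[Rplus/0]_(i < d) (a i * x i) = \big[Rplus/0]_(i < d) (a i * y i)) ->
    forall i, a i = 0.

Definition spanning (d : nat) (P : rpoint d -> Prop) : Prop :=
  forall z : zpoint d,
    exists L : seq (Z * zpoint d),
      (forall q, List.In q L -> P (zvec q.2)) /\
      \big[Z.add/0%Z]_(q <- L) q.1 = 1%Z /\
      forall i, z i = \big[Z.add/0%Z]_(q <- L) (q.1 * q.2 i)%Z.

From Pilot Require Import Defs.
From mathcomp Require Import all_boot ssralg matrix mxalgebra.
From mathcomp Require Import Rstruct.
From Stdlib Require Import Reals ZArith Lra Lia.
From Stdlib Require Import FunctionalExtensionality ClassicalEpsilon Classical.
Set Implicit Arguments. Unset Strict Implicit. Unset Printing Implicit Defensive.
Local Open Scope R_scope.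

(* For d >= 2 the hypothesis gives Flt(d) <= width(P)/4 < (3/8) width(P), so no translate
   of (3/8)P is lattice-free. Given a, b, c, e in P and 0 <= s <= 1/4, a lattice point y of
   (3/8)P + (3/8)b + (1/4)e lies in P, and so does y + (3/8)(a - b) + s(c - e). Hence if the
   translation vectors of two translates of (3/8)P differ by a small step s(c - e), lattice
   points chosen in them differ by a difference of two lattice points of P. Since P is
   full-dimensional, z - p is a real combination of the vectors v - p (v, p generators of P),
   so it is reached by finitely many small steps, and telescoping writes z as p plus a sum of
   differences of lattice points of P. For d = 1 the hypothesis is too weak for this
   argument, but P is then a segment with distinct integer endpoints, so it contains two
   consecutive integers. *)

Lemma transport_ext (A B : Type) (Q : (A -> B) -> Prop) f g :
  Q f -> (forall x, f x = g x) -> Q g.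
Proof. by move=> Qf /functional_extensionality <-. Qed.

Lemma sumR_ge0 (I : Type) (r : seq I) (P : pred I) (F : I -> R) :
  (forall i, P i -> 0 <= F i) -> 0 <= \big[Rplus/0]_(i <- r | P i) F i.
Proof. by move=> F_ge0; apply: big_ind => // *; lra. Qed.

Lemma sumR_le (I : Type) (r : seq I) (P : pred I) (F G : I -> R) :
  (forall i, P i -> F i <= G i) ->
  \big[Rplus/0]_(i <- r | P i) F i <= \big[Rplus/0]_(i <- r | P i) G i.
Proof. by move=> FG; apply: (big_ind2 (fun a b => a <= b)) => // *; lra. Qed.

Lemma Rabs_sumR_le (I : Type) (r : seq I) (P : pred I) (F : I -> R) :
  Rabs (\big[Rplus/0]_(i <- r | P i) F i) <= \big[Rplus/0]_(i <- r | P i) Rabs (F i).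
Proof.
apply: (big_ind2 (fun a b => Rabs a <= b)) => [|a b c e ab ce|i _].
- by rewrite Rabs_R0; lra.
- by have := Rabs_triang a c; lra.
- exact: Rle_refl.
Qed.

Lemma sumR_term_le n (F : 'I_n -> R) (j : 'I_n) :
  (forall i, 0 <= F i) -> F j <= \big[Rplus/0]_(i < n) F i.
Proof.
move=> F_ge0; rewrite (bigD1 j) //=.
rewrite -{1}[F j]Rplus_0_r; apply: Rplus_le_compat_l.
by apply: sumR_ge0 => i _; apply: F_ge0.
Qed.

Lemma sumR_sub n (F G : 'I_n -> R) :
  \big[Rplus/0]_(i < n) (F i - G i) =
  \big[Rplus/0]_(i < n) F i - \big[Rplus/0]_(i < n) G i.
Proof. exact: (@GRing.sumrB _ _ _ _ F G). Qed.

Lemma sumR_mull n (F : 'I_n -> R) (a : R) :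
  \big[Rplus/0]_(i < n) (a * F i) = a * \big[Rplus/0]_(i < n) F i.
Proof. exact: (esym (@GRing.mulr_sumr _ _ _ _ F a)). Qed.

Definition strictly_incr (phi : nat -> nat) := forall n, (phi n < phi n.+1)%nat.

Lemma strictly_incr_ge phi : strictly_incr phi -> forall n, (n <= phi n)%nat.
Proof. by move=> phi_incr; elim=> // n IHn; apply: leq_ltn_trans IHn (phi_incr n). Qed.

Lemma strictly_incr_comp phi psi :
  strictly_incr phi -> strictly_incr psi -> strictly_incr (fun n => phi (psi n)).
Proof. by move=> phi_incr psi_incr n; apply: (homo_ltn ltn_trans phi_incr). Qed.

Lemma Un_cv_const c : Un_cv (fun _ => c) c.
Proof. by move=> eps eps_gt0; exists 0%nat => n _; rewrite /R_dist Rminus_diag_eq // Rabs_R0. Qed.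

Lemma Un_cv_subseq u l phi : strictly_incr phi -> Un_cv u l -> Un_cv (fun n => u (phi n)) l.
Proof.
move=> phi_incr cvu eps eps_gt0; have [N cvN] := cvu eps eps_gt0.
exists N => n leNn; apply: cvN; have /leP := strictly_incr_ge phi_incr n; lia.
Qed.

Lemma Un_cv_ge0 u l : (forall n, 0 <= u n) -> Un_cv u l -> 0 <= l.
Proof.
move=> u_ge0 cvu; apply: Rnot_lt_le => l_lt0.
have [N cvN] := cvu (- l) ltac:(lra).
by have := cvN N (le_n N); have := u_ge0 N; have := Rle_abs (u N - l); rewrite /R_dist; lra.
Qed.

Lemma Un_cv_sumR n (F : nat -> nat -> R) (L : nat -> R) :
  (forall j, (j < n)%nat -> Un_cv (fun k => F k j) (L j)) ->
  Un_cv (fun k => \big[Rplus/0]_(j < n) F k j) (\big[Rplus/0]_(j < n) L j).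
Proof.
elim: n => [|n IHn] cvF.
  have -> : (fun k => \big[Rplus/0]_(j < 0) F k j) = (fun _ => 0).
    by apply: functional_extensionality => k; rewrite big_ord0.
  by rewrite big_ord0; apply: Un_cv_const.
have -> : (fun k => \big[Rplus/0]_(j < n.+1) F k j) =
          (fun k => \big[Rplus/0]_(j < n) F k j + F k n).
  by apply: functional_extensionality => k; rewrite big_ord_recr.
rewrite big_ord_recr; apply: CV_plus; last exact: cvF.
by apply: IHn => j ltjn; apply: cvF; apply: ltn_trans ltjn _.
Qed.

(* Stdlib's [Bolzano_Weierstrass] only provides an adherence value. *)
Lemma unit_seq_cv_subseq (u : nat -> R) : (forall n, 0 <= u n <= 1) ->
  exists phi l, strictly_incr phi /\ Un_cv (fun n => u (phi n)) l.
Proof.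
move=> u01; have [l adh_l] := @Bolzano_Weierstrass u _ (compact_P3 0 1) u01.
have close N k : exists p, (N <= p)%nat /\ Rabs (u p - l) < / (INR k + 1).
  have k1_gt0 : 0 < / (INR k + 1) by apply: Rinv_0_lt_compat; have := pos_INR k; lra.
  have [|p [leNp close_p]] := adh_l (fun y => Rabs (y - l) < / (INR k + 1)) N.
    by exists (mkposreal _ k1_gt0) => y.
  by exists p; split => //; apply/leP.
have [next nextP] := choice (fun N next => forall k, (N <= next k)%nat /\
    Rabs (u (next k) - l) < / (INR k + 1)) (fun N => choice _ (close N)).
pose fix phi n := if n is m.+1 then next (phi m).+1 n else next 0%nat 0%nat.
have phi_close n : Rabs (u (phi n) - l) < / (INR n + 1).
  by case: n => [|n]; apply: (proj2 (nextP _ _)).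
exists phi, l; split; first by move=> n; apply: (proj1 (nextP _ _)).
move=> eps eps_gt0; have [N [invN_lt N_gt0]] := archimed_cor1 eps eps_gt0.
exists N => n leNn; apply: Rlt_trans (phi_close n) _; apply: Rle_lt_trans invN_lt.
by apply: Rinv_le_contravar; [apply: lt_0_INR | have := le_INR _ _ leNn; lra].
Qed.

Lemma unit_family_cv_subseq m (lam : nat -> nat -> R) :
  (forall n j, (j < m)%nat -> 0 <= lam n j <= 1) ->
  exists phi (l : nat -> R), strictly_incr phi /\
    forall j, (j < m)%nat -> Un_cv (fun n => lam (phi n) j) (l j).
Proof.
elim: m => [|m IHm] lam01; first by exists (fun n => n), (fun _ => 0); split => // n.
have [n j ltjm|phi [l [phi_incr cv_l]]] := IHm; first by apply: lam01; apply: ltn_trans ltjm _.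
have [n|psi [lm [psi_incr cv_lm]]] := @unit_seq_cv_subseq (fun n => lam (phi n) m).
  exact: lam01.
exists (fun n => phi (psi n)), (fun j => if j == m then lm else l j); split.
  exact: strictly_incr_comp.
move=> j; rewrite ltnS leq_eqVlt => /orP[/eqP-> | ltjm]; first by rewrite eqxx.
by rewrite (ltn_eqF ltjm); apply: Un_cv_subseq psi_incr (cv_l j ltjm).
Qed.

Definition hull_pt d (V : seq (zpoint d)) (j : nat) : zpoint d := nth (fun _ => 0%Z) V j.

Section ConvexHull.

Variables (d : nat) (V : seq (zpoint d)).

Lemma conv_hull_convex : convex_set (conv_hull V).
Proof.
move=> x y t [l1 [l1_ge0 [l1_sum Ex]]] [l2 [l2_ge0 [l2_sum Ey]]] t01.
exists (fun j => t * l1 j + (1 - t) * l2 j); split; [|split].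
- by move=> j; have := l1_ge0 j; have := l2_ge0 j; nra.
- by rewrite big_split /= -!big_distrr /= l1_sum l2_sum; ring.
- move=> i; rewrite Ex Ey !big_distrr /= -big_split /=.
  by apply: eq_bigr => j _; ring.
Qed.

Lemma conv_hull_pt j : (j < size V)%nat -> conv_hull V (zvec (hull_pt V j)).
Proof.
move=> ltjV; pose j' := Ordinal ltjV.
have off_j (F : 'I_(size V) -> R) k : k != j' -> (if val k == j then 1 else 0) * F k = 0.
  by rewrite -val_eqE /= => /negbTE ->; ring.
exists (fun k => if k == j then 1 else 0); split; [|split].
- by move=> k; case: (k == j); lra.
- rewrite (bigD1 j') //= eqxx big1 => [|k /(off_j (fun _ => 1))]; last by rewrite Rmult_1_r.
  exact: Rplus_0_r.
- move=> i; rewrite (bigD1 j') //= eqxx big1 => [|k].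
    by rewrite /zvec /hull_pt; ring.
  exact: (off_j (fun k => IZR (hull_pt V k i))).
Qed.

Lemma conv_hull_bounded : bounded_set (conv_hull V).
Proof.
exists (\big[Rplus/0]_(j < size V) \big[Rplus/0]_(i < d) Rabs (IZR (hull_pt V j i))).
move=> x [l [l_ge0 [l_sum Ex]]] i; rewrite Ex.
apply: Rle_trans (Rabs_sumR_le _ _ _) _; apply: sumR_le => j _.
rewrite Rabs_mult (Rabs_pos_eq _ (l_ge0 j)).
have lj_le1 : l j <= 1.
  by rewrite -l_sum; apply: (@sumR_term_le _ (fun k : 'I_(size V) => l k) j).
have := @sumR_term_le _ (fun i => Rabs (IZR (hull_pt V j i))) i (fun _ => Rabs_pos _).
have := Rabs_pos (IZR (hull_pt V j i)); rewrite /hull_pt => *.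
by have := l_ge0 j; nra.
Qed.

Lemma conv_hull_level (a : rpoint d) c x :
  (forall j, (j < size V)%nat -> \big[Rplus/0]_(i < d) (a i * IZR (hull_pt V j i)) = c) ->
  conv_hull V x -> \big[Rplus/0]_(i < d) (a i * x i) = c.
Proof.
move=> level [l [_ [l_sum Ex]]].
under eq_bigr => i _ do rewrite Ex -sumR_mull.
rewrite exchange_big /= -[RHS]Rmult_1_l -l_sum big_distrl /=.
apply: eq_bigr => j _; rewrite -(level j (ltn_ord j)) -sumR_mull.
by apply: eq_bigr => i _; rewrite /hull_pt; ring.
Qed.

Lemma conv_hull_full_dim_level (a : rpoint d) : full_dim (conv_hull V) ->
  (forall j, (j < size V)%nat -> \big[Rplus/0]_(i < d) (a i * IZR (hull_pt V j i)) =
                                 \big[Rplus/0]_(i < d) (a i * IZR (hull_pt V 0 i))) ->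
  forall i, a i = 0.
Proof.
move=> fdV level; apply: fdV => x y Vx Vy.
by rewrite (conv_hull_level level Vx) (conv_hull_level level Vy).
Qed.

Lemma conv_hull_closed : Defs.closed_set (conv_hull V).
Proof.
(* Along a subsequence the convex weights converge, and the limit weights represent x. *)
move=> s x s_in cv_s.
have [lam lamP] := choice _ s_in.
have lam_ge0 n j : 0 <= lam n j by case: (lamP n).
have [n j ltjV|phi [l [phi_incr cv_lam]]] := @unit_family_cv_subseq (size V) lam.
  split; first exact: lam_ge0.
  have [_ [lam_sum _]] := lamP n; rewrite -lam_sum.
  exact: (@sumR_term_le _ (fun k : 'I_(size V) => lam n k) (Ordinal ltjV)).
have cv_s_phi i : Un_cv (fun n => s (phi n) i)
    (\big[Rplus/0]_(j < size V) (l j * IZR (hull_pt V j i))).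
  have -> : (fun n => s (phi n) i) =
      (fun n => \big[Rplus/0]_(j < size V) (lam (phi n) j * IZR (hull_pt V j i))).
    by apply: functional_extensionality => n; case: (lamP (phi n)) => [_ [_ ->]].
  apply: (@Un_cv_sumR _ (fun n j => lam (phi n) j * IZR (hull_pt V j i))
    (fun j => l j * IZR (hull_pt V j i))) => j ltjV.
  by apply: CV_mult; [exact: cv_lam | exact: Un_cv_const].
exists (fun j => if (j < size V)%nat then l j else 0); split; [|split].
- move=> j; case: ifP => [ltjV|_]; last exact: Rle_refl.
  by apply: Un_cv_ge0 (cv_lam j ltjV) => n; apply: lam_ge0.
- under eq_bigr => j _ do rewrite ltn_ord.
  apply: (UL_sequence (fun n => \big[Rplus/0]_(j < size V) lam (phi n) j)).
    by apply: (@Un_cv_sumR _ (fun n j => lam (phi n) j)).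
  have -> : (fun n => \big[Rplus/0]_(j < size V) lam (phi n) j) = (fun _ => 1).
    by apply: functional_extensionality => n; case: (lamP (phi n)) => [_ [-> _]].
  exact: Un_cv_const.
- move=> i; under eq_bigr => j _ do rewrite ltn_ord.
  exact: UL_sequence (Un_cv_subseq phi_incr (cv_s i)) (cv_s_phi i).
Qed.

Lemma conv_hull_size_gt0 x : conv_hull V x -> (0 < size V)%nat.
Proof. by case: V => [|//] [l [_ [l_sum _]]]; rewrite big_ord0 in l_sum; lra. Qed.

End ConvexHull.

Lemma width_nonempty d (P : rpoint d -> Prop) w : is_width P w -> nonempty_set P.
Proof. by move=> [[u [_ [[x [y [Px _]]] _]]] _]; exists x. Qed.

Lemma full_dim_width_gt0 d (P : rpoint d -> Prop) w : full_dim P -> is_width P w -> 0 < w.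
Proof.
move=> fdP [[u [[i ui_neq0] [_ max_u]]] _]; apply: Rnot_le_lt => w_le0.
apply: ui_neq0; apply: eq_IZR; apply: (fdP (fun i => IZR (u i))) => x y Px Py.
have := max_u _ (ex_intro _ x (ex_intro _ y (conj Px (conj Py erefl)))).
have := Rabs_pos (lfun u x - lfun u y); rewrite /lfun => *.
by apply: Rminus_diag_uniq; apply: NNPP => /Rabs_no_R0; apply; lra.
Qed.

Section ScaledExtrema.

Variables (S T : R -> Prop) (a : R).
Hypotheses (a_gt0 : 0 < a) (TS : forall v, T v <-> S (v / a)).

Let mul_divK m : a * m / a = m.
Proof. by field; lra. Qed.

Let divKr v : a * (v / a) = v.
Proof. by field; lra. Qed.

Let TS_scale m : T (a * m) <-> S m.
Proof. by rewrite TS mul_divK. Qed.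

Lemma is_max_scale m : is_max T (a * m) <-> is_max S m.
Proof.
split=> [[Tm maxm] | [Sm maxm]]; split.
- exact/TS_scale.
- by move=> v /TS_scale /maxm; apply: Rmult_le_reg_l.
- exact/TS_scale.
- by move=> v /TS /maxm le_vm; rewrite -(divKr v); apply: Rmult_le_compat_l; lra.
Qed.

Lemma is_min_scale m : is_min T (a * m) <-> is_min S m.
Proof.
split=> [[Tm minm] | [Sm minm]]; split.
- exact/TS_scale.
- by move=> v /TS_scale /minm; apply: Rmult_le_reg_l.
- exact/TS_scale.
- by move=> v /TS /minm le_mv; rewrite -(divKr v); apply: Rmult_le_compat_l; lra.
Qed.

End ScaledExtrema.

Definition homothety d (P : rpoint d -> Prop) (a : R) (s : rpoint d) : rpoint d -> Prop :=
  fun x => exists2 p, P p & x = (fun i => a * p i + s i).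

Lemma lfun_affine d (u : zpoint d) a (p s : rpoint d) :
  lfun u (fun i => a * p i + s i) = a * lfun u p + lfun u s.
Proof. by rewrite /lfun -sumR_mull -big_split /=; apply: eq_bigr => i _; ring. Qed.

Section Homothety.

Variables (d : nat) (P : rpoint d -> Prop) (a : R) (s : rpoint d).
Hypothesis a_gt0 : 0 < a.

Let chord_homothety u p q :
  Rabs (lfun u (fun i => a * p i + s i) - lfun u (fun i => a * q i + s i)) =
  a * Rabs (lfun u p - lfun u q).
Proof.
rewrite -[a in RHS]Rabs_pos_eq -?Rabs_mult; last by lra.
by congr Rabs; rewrite !lfun_affine; ring.
Qed.

Lemma dir_width_homothety u w : dir_width (homothety P a s) u (a * w) <-> dir_width P u w.
Proof.
apply: is_max_scale => // v; split.
- move=> [_ [_ [[p Pp ->] [[q Pq ->] ->]]]]; exists p, q; do 2!split=> //.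
  by rewrite chord_homothety; field; lra.
- move=> [p [q [Pp [Pq Ev]]]].
  exists (fun i => a * p i + s i), (fun i => a * q i + s i).
  do 2?split; [by exists p | by exists q |].
  by rewrite chord_homothety -Ev; field; lra.
Qed.

Lemma width_homothety w : is_width P w -> is_width (homothety P a s) (a * w).
Proof.
move=> Pw; apply: (proj2 (is_min_scale a_gt0 _ w) Pw) => v.
have Ev : v = a * (v / a) by field; lra.
rewrite {1}Ev; split=> [[u [nz_u /dir_width_homothety]] | [u [nz_u /dir_width_homothety]]];
  by exists u.
Qed.

Lemma homothety_closed : Defs.closed_set P -> Defs.closed_set (homothety P a s).
Proof.
move=> P_closed q x q_in cv_q.
exists (fun i => (x i - s i) / a); last by apply: functional_extensionality => i; field; lra.
apply: (P_closed (fun n i => (q n i - s i) / a)) => [n | i].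
- have [p Pp ->] := q_in n.
  by apply: transport_ext Pp _ => i; field; lra.
- exact: CV_mult (CV_minus _ _ _ _ (cv_q i) (Un_cv_const (s i))) (Un_cv_const (/ a)).
Qed.

Lemma homothety_bounded : bounded_set P -> bounded_set (homothety P a s).
Proof.
move=> [M boundM]; exists (a * M + \big[Rplus/0]_(i < d) Rabs (s i)).
move=> _ [p Pp ->] i.
have := @sumR_term_le _ (fun i => Rabs (s i)) i (fun _ => Rabs_pos _).
have := Rabs_triang (a * p i) (s i); rewrite Rabs_mult (Rabs_pos_eq a); last lra.
by have := boundM p Pp i; nra.
Qed.

Lemma homothety_convex : convex_set P -> convex_set (homothety P a s).
Proof.
move=> P_convex _ _ t [p Pp ->] [q Pq ->] t01.
exists (fun i => t * p i + (1 - t) * q i); first exact: P_convex.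
by apply: functional_extensionality => i; ring.
Qed.

End Homothety.

Lemma homothety_lattice_point d (P : rpoint d -> Prop) f w a s :
  nonempty_set P -> Defs.closed_set P -> bounded_set P -> convex_set P ->
  is_Flt d f -> is_width P w -> 0 < a -> f < a * w ->
  exists z, homothety P a s (zvec z).
Proof.
move=> [p Pp] P_closed P_bounded P_convex [Flt_ub _] Pw a_gt0 f_lt.
apply: NNPP => no_lattice; suff : a * w <= f by lra.
apply: Flt_ub; exists (homothety P a s); do 5?split.
- by exists (fun i => a * p i + s i), p.
- exact: homothety_closed.
- exact: homothety_bounded.
- exact: homothety_convex.
- move=> x hom_x [z Ez]; apply: no_lattice; exists z.
  by rewrite (_ : zvec z = x) //; apply: functional_extensionality => i; rewrite Ez.
- exact: width_homothety.
Qed.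

(* [spanning P] unfolds to [forall z, int_affine_comb P z]. *)
Definition int_affine_comb d (P : rpoint d -> Prop) (z : zpoint d) : Prop :=
  exists L : seq (Z * zpoint d),
    (forall q, List.In q L -> P (zvec q.2)) /\
    \big[Z.add/0%Z]_(q <- L) q.1 = 1%Z /\
    forall i, z i = \big[Z.add/0%Z]_(q <- L) (q.1 * q.2 i)%Z.

Section IntAffineComb.

Variables (d : nat) (P : rpoint d -> Prop).

Lemma int_affine_comb_pt y : P (zvec y) -> int_affine_comb P y.
Proof.
move=> Py; exists [:: (1%Z, y)]; split; [|split].
- by move=> q [<-|[]].
- by rewrite big_cons big_nil.
- by move=> i; rewrite big_cons big_nil; cbn [fst snd]; lia.
Qed.

Lemma int_affine_comb_chord g y t :
  int_affine_comb P g -> P (zvec y) -> P (zvec (fun i => y i + t i)%Z) ->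
  int_affine_comb P (fun i => g i + t i)%Z.
Proof.
move=> [L [L_in [L_sum Eg]]] Py Pyt.
exists [:: (1%Z, fun i => y i + t i)%Z, ((-1)%Z, y) & L]; split; [|split].
- by move=> q [<-|[<-|/L_in]].
- by rewrite !big_cons L_sum; cbn [fst snd]; lia.
- by move=> i; rewrite !big_cons -Eg; cbn [fst snd]; lia.
Qed.

End IntAffineComb.

Inductive step_reachable d (P : rpoint d -> Prop) : rpoint d -> Prop :=
| reach_origin : step_reachable P (fun _ => 0)
| reach_step D c e s : step_reachable P D -> P c -> P e -> 0 <= s <= 1/4 ->
    step_reachable P (fun i => D i + s * (c i - e i)).

(* Any constant in (1/4, 1/2) would do for 3/8: above 1/4 to beat Flt(d) <= width/4, and
   below 1/2 to leave room for the steps s(c - e) with s <= 1 - 2 * 3/8. *)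
Section LatticeChords.

Variables (d : nat) (P : rpoint d -> Prop).
Hypothesis P_convex : convex_set P.
Hypothesis lattice_translate : forall s, exists z, homothety P (3/8) s (zvec z).

Lemma convex_comb3 p q r : P p -> P q -> P r ->
  P (fun i => 3/8 * p i + 3/8 * q i + 1/4 * r i).
Proof.
move=> Pp Pq Pr; have Pqr := @P_convex _ _ (3/5) Pq Pr ltac:(lra).
by apply: transport_ext (@P_convex _ _ (3/8) Pp Pqr ltac:(lra)) _ => i; field.
Qed.

Lemma lattice_chord a b c e s t : P a -> P b -> P c -> P e -> 0 <= s <= 1/4 ->
  zvec t = (fun i => 3/8 * (a i - b i) + s * (c i - e i)) ->
  exists y, P (zvec y) /\ P (zvec (fun i => y i + t i)%Z).
Proof.
move=> Pa Pb Pc Pe s_bd Et.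
have [y [p Pp Ey]] := lattice_translate (fun i => 3/8 * b i + 1/4 * e i).
exists y; split.
  by rewrite Ey; apply: transport_ext (convex_comb3 Pp Pb Pe) _ => i; ring.
have Pce := @P_convex _ _ (4 * s) Pc Pe ltac:(lra).
apply: transport_ext (convex_comb3 Pp Pa Pce) _ => i; rewrite /zvec plus_IZR.
have := congr1 (fun f => f i) Ey; have := congr1 (fun f => f i) Et; rewrite /zvec => -> ->.
by field.
Qed.

Lemma lattice_shift_step x z1 z2 c e s g :
  homothety P (3/8) x (zvec z1) ->
  homothety P (3/8) (fun i => x i + s * (c i - e i)) (zvec z2) ->
  P c -> P e -> 0 <= s <= 1/4 ->
  int_affine_comb P g -> int_affine_comb P (fun i => g i + z2 i - z1 i)%Z.
Proof.
move=> [p1 Pp1 E1] [p2 Pp2 E2] Pc Pe s_bd Gg.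
have [|y [Py Pyt]] := @lattice_chord p2 p1 c e s (fun i => z2 i - z1 i)%Z Pp2 Pp1 Pc Pe s_bd.
  apply: functional_extensionality => i; rewrite /zvec minus_IZR.
  have := congr1 (fun f => f i) E1; have := congr1 (fun f => f i) E2; rewrite /zvec => -> ->.
  by field.
by apply: transport_ext (int_affine_comb_chord Gg Py Pyt) _ => i; lia.
Qed.

Lemma lattice_shift_reachable D : step_reachable P D ->
  forall x z1 z2 g, homothety P (3/8) x (zvec z1) ->
  homothety P (3/8) (fun i => x i + D i) (zvec z2) ->
  int_affine_comb P g -> int_affine_comb P (fun i => g i + z2 i - z1 i)%Z.
Proof.
elim: D / => [|D c e s _ IHD Pc Pe s_bd] x z1 z2 g hom1 hom2 Gg.
- have [p Pp _] := hom1.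
  rewrite (_ : (fun i => x i + 0) = fun i => x i + 0 * (p i - p i)) in hom2.
    by apply: (lattice_shift_step hom1 hom2 Pp Pp _ Gg); lra.
  by apply: functional_extensionality => i; ring.
- have [zm homm] := lattice_translate (fun i => x i + D i).
  rewrite (_ : (fun i => _) = fun i => (x i + D i) + s * (c i - e i)) in hom2; last first.
    by apply: functional_extensionality => i; ring.
  have Gm := IHD _ _ _ _ hom1 homm Gg.
  by apply: transport_ext (lattice_shift_step homm hom2 Pc Pe s_bd Gm) _ => i; lia.
Qed.

Lemma int_affine_comb_reachable p z : P (zvec p) ->
  step_reachable P (fun i => IZR (z i) - IZR (p i)) -> int_affine_comb P z.
Proof.
move=> Pp reach_zp; have [z1 hom1] := lattice_translate (fun _ => 0).
have hom2 : homothety P (3/8) (fun i => 0 + (IZR (z i) - IZR (p i)))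
    (zvec (fun i => z1 i + z i - p i)%Z).
  have [q Pq E1] := hom1; exists q => //; apply: functional_extensionality => i.
  rewrite /zvec minus_IZR plus_IZR.
  by have := congr1 (fun f => f i) E1; rewrite /zvec => ->; ring.
have Gz := lattice_shift_reachable reach_zp hom1 hom2 (int_affine_comb_pt Pp).
by apply: transport_ext Gz _ => i; lia.
Qed.

End LatticeChords.

Lemma step_reachable_cone d (P : rpoint d -> Prop) D c e r :
  step_reachable P D -> P c -> P e -> 0 <= r ->
  step_reachable P (fun i => D i + r * (c i - e i)).
Proof.
move=> reachD Pc Pe r_ge0; have [N N_gt] := INR_unbounded (4 * r).
have N_gt0 : 0 < INR N by lra.
have step_bd : 0 <= r / INR N <= 1/4.
  split; first by apply: Rmult_le_pos => //; apply/Rlt_le/Rinv_0_lt_compat.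
  by apply: (Rmult_le_reg_r (INR N)) => //; rewrite /Rdiv Rmult_assoc Rinv_l; lra.
have iter n : step_reachable P (fun i => D i + INR n * (r / INR N) * (c i - e i)).
  elim: n => [|n IHn]; first by apply: transport_ext reachD _ => i /=; ring.
  by apply: transport_ext (reach_step IHn Pc Pe step_bd) _ => i; rewrite S_INR; ring.
by apply: transport_ext (iter N) _ => i; field; lra.
Qed.

Lemma conv_hull_reachable_span d (V : seq (zpoint d)) (u : nat -> R) m :
  (0 < size V)%nat -> (m <= size V)%nat ->
  step_reachable (conv_hull V) (fun i =>
    \big[Rplus/0]_(j < m) (u j * (IZR (hull_pt V j i) - IZR (hull_pt V 0 i)))).
Proof.
move=> V_gt0; elim: m => [|m IHm] le_mV.
  by apply: transport_ext (reach_origin _) _ => i; rewrite big_ord0.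
have reach_m := IHm (ltnW le_mV).
have Pm := conv_hull_pt le_mV; have P0 := conv_hull_pt V_gt0.
have [u_ge0 | u_lt0] := Rle_lt_dec 0 (u m).
- apply: transport_ext (step_reachable_cone reach_m Pm P0 u_ge0) _ => i.
  by rewrite big_ord_recr.
- apply: transport_ext (@step_reachable_cone _ _ _ _ _ (- u m) reach_m P0 Pm _) _ => [|i].
    lra.
  by rewrite big_ord_recr /zvec /=; ring.
Qed.

Section FullDimSpan.
Local Open Scope ring_scope.
Local Open Scope R_scope.

Lemma full_dim_span d (V : seq (zpoint d)) : (0 < size V)%nat -> full_dim (conv_hull V) ->
  forall v : rpoint d, exists u : nat -> R, forall i,
    v i = \big[Rplus/0]_(j < size V) (u j * (IZR (hull_pt V j i) - IZR (hull_pt V 0 i))).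
Proof.
(* A row r with r A^T = 0 is a functional constant on the generators, hence zero. *)
move=> V_gt0 fdV v.
pose A : 'M[R]_(size V, d) :=
  \matrix_(j, i) (IZR (hull_pt V j i) - IZR (hull_pt V 0 i)).
have rA0 (r : 'rV[R]_d) : r *m A^T = GRing.zero -> r = GRing.zero.
  move=> rA; have level j : (j < size V)%nat ->
      \big[Rplus/0]_(i < d) (r ord0 i * IZR (hull_pt V j i)) =
      \big[Rplus/0]_(i < d) (r ord0 i * IZR (hull_pt V 0 i)).
    move=> ltjV; apply: Rminus_diag_uniq; rewrite -sumR_sub.
    have := congr1 (fun M : 'M_(1, size V) => M ord0 (Ordinal ltjV)) rA.
    rewrite /= !mxE => rAj; apply: etrans rAj; apply: eq_bigr => i _.
    by rewrite !mxE; symmetry; apply: Rmult_minus_distr_l.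
  by apply/rowP => i; rewrite [RHS]mxE; apply: (conv_hull_full_dim_level fdV level).
have ker0 : kermx A^T = GRing.zero.
  by apply/row_matrixP => k; rewrite row0; apply: rA0; rewrite -row_mul mulmx_ker row0.
have : (\row_i v i <= A)%MS.
  by rewrite submx_full // /row_full -mxrank_tr; move: ker0 => /eqP; rewrite kermx_eq0.
case/submxP => D /(congr1 (fun M : 'M_(1, d) => M ord0)) ED.
exists (fun j => D ord0 (insubd (Ordinal V_gt0) j)) => i.
have := congr1 (fun f => f i) ED; rewrite /= !mxE => ->.
by apply: eq_bigr => j _; rewrite valKd mxE.
Qed.

End FullDimSpan.

Lemma spanning_of_Flt_lt d (V : seq (zpoint d)) f w :
  full_dim (conv_hull V) -> is_Flt d f -> is_width (conv_hull V) w -> f < 3/8 * w ->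
  spanning (conv_hull V).
Proof.
move=> fdV Flt_f Vw f_lt z.
have [x Vx] := width_nonempty Vw; have V_gt0 := conv_hull_size_gt0 Vx.
have lattice_translate s : exists z, homothety (conv_hull V) (3/8) s (zvec z).
  apply: homothety_lattice_point Flt_f Vw _ f_lt; last lra.
  - by exists x.
  - exact: conv_hull_closed.
  - exact: conv_hull_bounded.
  - exact: conv_hull_convex.
have [u Eu] := full_dim_span V_gt0 fdV (fun i => IZR (z i) - IZR (hull_pt V 0 i)).
apply: (int_affine_comb_reachable (@conv_hull_convex _ V) lattice_translate (conv_hull_pt V_gt0)).
by apply: transport_ext (conv_hull_reachable_span u V_gt0 (leqnn _)) _ => i; rewrite Eu.
Qed.

Lemma spanning_dim1 (P : rpoint 1 -> Prop) lo hi : convex_set P ->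
  P (zvec lo) -> P (zvec hi) -> (lo ord0 < hi ord0)%Z -> spanning P.
Proof.
move=> P_convex Plo Phi lt_lo_hi z.
have gap_gt1 : 1 <= IZR (hi ord0) - IZR (lo ord0) by rewrite -minus_IZR; apply: IZR_le; lia.
have Plo1 : P (zvec (fun i => lo i + 1)%Z).
  have t01 : 0 <= / (IZR (hi ord0) - IZR (lo ord0)) <= 1.
    split; first by apply/Rlt_le/Rinv_0_lt_compat; lra.
    by rewrite -Rinv_1; apply: Rinv_le_contravar; lra.
  apply: transport_ext (P_convex _ _ _ Phi Plo t01) _ => i.
  by rewrite (ord1 i) /zvec plus_IZR; field; lra.
have Gk k : int_affine_comb P (fun i => lo i + k)%Z.
  elim/Z.peano_ind: k => [|k Gk|k Gk].
  - by apply: transport_ext (int_affine_comb_pt Plo) _ => i; lia.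
  - by apply: transport_ext (int_affine_comb_chord (t := fun _ => 1%Z) Gk Plo Plo1) _ => i; lia.
  - have Plo' : P (zvec (fun i => lo i + 1 + -1)%Z).
      by apply: (transport_ext (Q := fun g => P (zvec g)) Plo) => i; lia.
    by apply: transport_ext (int_affine_comb_chord (t := fun _ => (-1)%Z) Gk Plo1 Plo') _ => i; lia.
by apply: transport_ext (Gk (z ord0 - lo ord0)%Z) _ => i; rewrite (ord1 i); lia.
Qed.

Lemma spanning_conv_hull_dim1 (V : seq (zpoint 1)) :
  full_dim (conv_hull V) -> spanning (conv_hull V).
Proof.
move=> fdV; have V_gt0 : (0 < size V)%nat.
  case: V fdV => [fdV|//]; suff : 1 = 0 by lra.
  by apply: (@conv_hull_full_dim_level _ _ (fun _ => 1) fdV) ord0 => j.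
have [j [ltjV neq_j0]] : exists j, (j < size V)%nat /\ hull_pt V j ord0 <> hull_pt V 0 ord0.
  apply: NNPP => all_eq; suff : 1 = 0 by lra.
  apply: (@conv_hull_full_dim_level _ _ (fun _ => 1) fdV) ord0 => j ltjV.
  rewrite !big_ord1; congr (_ * IZR _).
  by apply: NNPP => neq; apply: all_eq; exists j.
have P0 := conv_hull_pt V_gt0; have Pj := conv_hull_pt ltjV.
have [lt_j0 | le_0j] := Z_lt_le_dec (hull_pt V j ord0) (hull_pt V 0 ord0).
- exact: spanning_dim1 (@conv_hull_convex _ V) Pj P0 lt_j0.
- by apply: spanning_dim1 (@conv_hull_convex _ V) P0 Pj _; lia.
Qed.

Theorem corollary2p5 (d : nat) (V : seq (zpoint d)) :
  (1 <= d)%nat ->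
  full_dim (conv_hull V) ->
  (exists f w, is_Flt d f /\ is_width (conv_hull V) w /\ 2 * f * INR d <= w) ->
  spanning (conv_hull V).
Proof.
move=> d_ge1 fdV [f [w [Flt_f [Vw fw]]]].
have [d_ge2 | d_lt2] := leqP 2 d.
  apply: (spanning_of_Flt_lt fdV Flt_f Vw).
  have := full_dim_width_gt0 fdV Vw; have : 2 <= INR d by apply: (le_INR 2); apply/leP.
  by case: (Rle_lt_dec f 0); nra.
have d1 : d = 1%nat by apply/eqP; rewrite eqn_leq -ltnS d_lt2 d_ge1.
by subst d; apply: spanning_conv_hull_dim1.
Qed.
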